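(* Let $(X,\mathfrak{m})$ be a measurable space with $\mathfrak{m}$ an infinite $\sigma$-algebra containing every finite subset of $X$, and let $X^*=\mathfrak{m}^\beta\setminus e(X)$. Then every countable union of nowhere dense subsets of $X^*$ is nowhere dense in $X^*$.
   Context: An $\mathfrak{m}$-filter is a family $p\subseteq\mathfrak{m}$ with $\emptyset\notin p$, $X\in p$, closed under supersets belonging to $\mathfrak{m}$ and under finite intersections; an $\mathfrak{m}$-ultrafilter is a maximal $\mathfrak{m}$-filter; $\mathfrak{m}^\beta$ is the set of all $\mathfrak{m}$-ultrafilters, topologized by the base $\{\widehat{A}:A\in\mathfrak{m}\}$ where $\widehat{A}=\{p\in\mathfrak{m}^\beta:A\in p\}$. The map $e:X\to\mathfrak{m}^\beta$ is $e(x)=\{A\in\mathfrak{m}:x\in A\}$. $X^*$ carries the subspace topology. *)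

From Stdlib Require Import List Classical.

Set Implicit Arguments.

Section Defs.
Variable X : Type.
Variable m : (X -> Prop) -> Prop.

Definition is_sigma_algebra : Prop :=
  m (fun _ => True) /\
  (forall A, m A -> m (fun x => ~ A x)) /\
  (forall F : nat -> X -> Prop, (forall n, m (F n)) -> m (fun x => exists n, F n x)).

Definition family_infinite : Prop :=
  ~ exists l : list (X -> Prop), forall A, m A -> In A l.

Definition contains_finite_sets : Prop :=
  forall l : list X, m (fun x => In x l).

Definition is_mfilter (p : (X -> Prop) -> Prop) : Prop :=
  (forall A, p A -> m A) /\
  (forall A, p A -> exists x, A x) /\
  p (fun _ => True) /\
  (forall A B, p A -> m B -> (forall x, A x -> B x) -> p B) /\
  (forall A B, p A -> p B -> p (fun x => A x /\ B x)).

Definition is_multrafilter (p : (X -> Prop) -> Prop) : Prop :=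
  is_mfilter p /\
  forall q, is_mfilter q -> (forall A, p A -> q A) -> forall A, q A -> p A.

Definition mbeta : Type := { p : (X -> Prop) -> Prop | is_multrafilter p }.

Definition hat (A : X -> Prop) : mbeta -> Prop := fun p => proj1_sig p A.

Definition mbeta_open (U : mbeta -> Prop) : Prop :=
  forall p, U p -> exists A, m A /\ hat A p /\ forall q, hat A q -> U q.

(* e(x) = { A in m : x in A }; p = e(x) (extensional equality of families) *)
Definition is_e (x : X) (p : mbeta) : Prop :=
  forall A, proj1_sig p A <-> (m A /\ A x).

Definition Xstar (p : mbeta) : Prop := ~ exists x, is_e x p.

Definition Xstar_open (U : mbeta -> Prop) : Prop :=
  exists V, mbeta_open V /\ forall p, U p <-> (V p /\ Xstar p).

Definition Xstar_closure (N : mbeta -> Prop) : mbeta -> Prop :=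
  fun p => Xstar p /\
    forall U, Xstar_open U -> U p -> exists q, U q /\ N q.

Definition Xstar_nowhere_dense (N : mbeta -> Prop) : Prop :=
  (forall p, N p -> Xstar p) /\
  forall U, Xstar_open U -> (forall p, U p -> Xstar_closure N p) ->
    forall p, ~ U p.

End Defs.

From Stdlib Require Import List Lia Classical.
From mathcomp Require boolp classical_sets.

(* A point p of X^* and a basic neighbourhood hat A of it force A to be
   infinite, since p contains every cofinite measurable set; conversely every
   infinite measurable set carries a point of X^*.  Given nowhere dense sets
   N_n and a basic open set meeting X^*, shrink it successively so that the
   n-th set avoids N_n, and pick distinct points x_n in the n-th set.  The
   countable set B = {x_n} is measurable, infinite and almost contained in
   every stage, so hat B meets X^* inside the original open set and avoids
   every N_n. *)

Definition subset {U : Type} (A B : U -> Prop) : Prop := forall u, A u -> B u.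

Definition infinite_set {U : Type} (A : U -> Prop) : Prop :=
  forall l : list U, exists u, A u /\ ~ In u l.

Definition almost_subset {U : Type} (B A : U -> Prop) : Prop :=
  exists l : list U, forall u, B u -> ~ In u l -> A u.

Lemma dependent_choice {T : Type} (P : T -> Prop) (R : nat -> T -> T -> Prop)
  (s0 : T) :
  P s0 -> (forall n s, P s -> exists s', P s' /\ R n s s') ->
  exists f : nat -> T, f 0 = s0 /\ forall n, P (f n) /\ R n (f n) (f (S n)).
Proof.
  intros Hs0 HR.
  assert (step : forall n (s : {s | P s}),
             {s' : {s | P s} | R n (proj1_sig s) (proj1_sig s')}).
  { intros n [s Hs]. apply boolp.constructive_indefinite_description.
    destruct (HR n s Hs) as [s' [Hs' Rss']]. exists (exist _ s' Hs'). exact Rss'. }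
  pose (g := fix g n := match n with
                        | 0 => exist P s0 Hs0
                        | S k => proj1_sig (step k (g k))
                        end).
  exists (fun n => proj1_sig (g n)). split; [reflexivity|].
  intro n. split; [apply proj2_sig | exact (proj2_sig (step n (g n)))].
Qed.

Lemma zorn_preorder {T : Type} (t0 : T) (R : T -> T -> Prop) :
  (forall t, R t t) -> (forall r s t, R r s -> R s t -> R r t) ->
  (forall C : T -> Prop, (forall s t, C s -> C t -> R s t \/ R t s) ->
     exists t, forall s, C s -> R s t) ->
  exists t, forall s, R t s -> R s t.
Proof.
  intros Hrefl Htrans Hchain.
  destruct (classical_sets.ZL_preorder t0 (R := fun s t => boolp.asbool (R s t)))
    as [t Ht].
  - intro t. apply boolp.asboolT, Hrefl.
  - intros r s t Hrs Hst.
    apply boolp.asboolT, (Htrans r s t); apply boolp.asboolW; assumption.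
  - intros C HC. destruct (Hchain C) as [t Ht].
    + intros s t Cs Ct.
      destruct (HC s t Cs Ct); [left|right]; apply boolp.asboolW; assumption.
    + exists t. intros s Cs. apply boolp.asboolT, Ht, Cs.
  - exists t. intros s Rts. apply boolp.asboolW, Ht, boolp.asboolT, Rts.
Qed.

Section Remainder.

Variables (X : Type) (m : (X -> Prop) -> Prop).
Hypothesis Hsig : is_sigma_algebra m.
Hypothesis Hfin : contains_finite_sets m.

Lemma measurable_setI (A B : X -> Prop) : m A -> m B -> m (fun x => A x /\ B x).
Proof.
  intros HA HB. destruct Hsig as [_ [Hcompl Hunion]].
  pose (F := fun n : nat => match n with 0 => A | _ => B end).
  assert (HF : m (fun x => ~ exists n, ~ F n x)).
  { apply Hcompl, (Hunion (fun n x => ~ F n x)). intro n.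
    apply Hcompl. destruct n; assumption. }
  assert (E : (fun x => ~ exists n, ~ F n x) = (fun x => A x /\ B x)).
  { apply boolp.funext. intro x. apply boolp.propext. split.
    - intro H. split; apply NNPP; intro Hn; apply H; [exists 0 | exists 1]; exact Hn.
    - intros [HAx HBx] [[|n] Hn]; contradiction. }
  rewrite <- E. exact HF.
Qed.

Lemma measurable_cofinite (l : list X) : m (fun x => ~ In x l).
Proof. apply (proj1 (proj2 Hsig)), Hfin. Qed.

Lemma mbeta_mfilter (p : mbeta m) : is_mfilter m (proj1_sig p).
Proof. exact (proj1 (proj2_sig p)). Qed.

Lemma multrafilter_setC (p : (X -> Prop) -> Prop) (A : X -> Prop) :
  is_multrafilter m p -> m A -> ~ p A -> p (fun x => ~ A x).
Proof.
  intros [[Hm [_ [HT [Hup Hint]]]] Hmax] HA HnA.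
  assert (Hmeet : forall D, p D -> exists x, D x /\ ~ A x).
  { intros D HD. apply NNPP. intro H. apply HnA, (Hup D); auto.
    intros x Dx. apply NNPP. intro Hx. apply H. exists x. auto. }
  pose (q := fun C => m C /\ exists D, p D /\ forall x, D x -> ~ A x -> C x).
  assert (Hq : is_mfilter m q).
  { split; [|split; [|split; [|split]]].
    - intros C [HC _]. exact HC.
    - intros C [_ [D [HD HDC]]]. destruct (Hmeet D HD) as [x [Dx Ax]].
      exists x. auto.
    - split; [apply Hsig|]. exists (fun _ => True). auto.
    - intros C C' [_ [D [HD HDC]]] HC' HCC'. split; [exact HC'|].
      exists D. auto.
    - intros C C' [HC [D [HD HDC]]] [HC' [D' [HD' HDC']]].
      split; [apply measurable_setI; assumption|].
      exists (fun x => D x /\ D' x). split; [auto|].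
      intros x [Dx D'x] Ax. auto. }
  apply (Hmax q Hq).
  - intros C HC. split; [auto|]. exists C. auto.
  - split; [apply Hsig; exact HA|]. exists (fun _ => True). auto.
Qed.

Lemma Xstar_cofinite (p : mbeta m) (l : list X) :
  Xstar p -> proj1_sig p (fun x => ~ In x l).
Proof.
  intro Hp. destruct (mbeta_mfilter p) as [Hm [Hne [HT [Hup Hint]]]].
  induction l as [|a l IH].
  - apply (Hup (fun _ => True)); auto. apply measurable_cofinite.
  - assert (Hna : ~ proj1_sig p (fun x => In x (a :: nil))).
    { intro Ha. apply Hp. exists a. intro A. split.
      - intro HA. split; [auto|].
        destruct (Hne _ (Hint _ _ HA Ha)) as [y [Ay [<-|[]]]]. exact Ay.
      - intros [HA Aa]. apply (Hup _ A Ha HA). intros y [<-|[]]. exact Aa. }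
    pose proof (multrafilter_setC _ _ (proj2_sig p) (Hfin _) Hna) as Ha.
    apply (Hup _ _ (Hint _ _ Ha IH)); [apply measurable_cofinite|].
    intros x [Hxa Hxl] [<-|Hx]; [apply Hxa; left|]; auto.
Qed.

Definition meets_Xstar (A : X -> Prop) : Prop := exists p : mbeta m, hat A p /\ Xstar p.

Lemma meets_Xstar_infinite (A : X -> Prop) : meets_Xstar A -> infinite_set A.
Proof.
  intros [p [HAp Hp]] l. destruct (mbeta_mfilter p) as [_ [Hne [_ [_ Hint]]]].
  exact (Hne _ (Hint _ _ HAp (Xstar_cofinite p l Hp))).
Qed.

Lemma Xstar_hat_almost_subset (p : mbeta m) (A B : X -> Prop) :
  Xstar p -> m A -> hat B p -> almost_subset B A -> hat A p.
Proof.
  intros Hp HA HBp [l Hl]. destruct (mbeta_mfilter p) as [_ [_ [_ [Hup Hint]]]].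
  apply (Hup _ A (Hint _ _ HBp (Xstar_cofinite p l Hp)) HA).
  intros x [Bx Hx]. auto.
Qed.

Lemma hat_Xstar_open (A : X -> Prop) : Xstar_open (fun p : mbeta m => hat A p /\ Xstar p).
Proof.
  exists (hat A). split; [|tauto].
  intros p Hp. exists A. split; [|auto].
  exact (proj1 (mbeta_mfilter p) A Hp).
Qed.

Lemma mfilter_chain_union {I : Type} (C : I -> Prop) (M : I -> (X -> Prop) -> Prop) :
  (exists i, C i) -> (forall i j, C i -> C j -> subset (M i) (M j) \/ subset (M j) (M i)) ->
  (forall i, C i -> is_mfilter m (M i)) ->
  is_mfilter m (fun A => exists i, C i /\ M i A).
Proof.
  intros [i0 Ci0] Hchain HC.
  split; [|split; [|split; [|split]]].
  - intros A [i [Ci MA]]. exact (proj1 (HC i Ci) A MA).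
  - intros A [i [Ci MA]]. exact (proj1 (proj2 (HC i Ci)) A MA).
  - exists i0. split; [exact Ci0 | apply (HC i0 Ci0)].
  - intros A B [i [Ci MA]] HB AB. exists i. split; [exact Ci|].
    exact (proj1 (proj2 (proj2 (proj2 (HC i Ci)))) A B MA HB AB).
  - intros A B [i [Ci MiA]] [j [Cj MjB]].
    destruct (Hchain i j Ci Cj) as [Hij | Hji].
    + exists j. split; [exact Cj|].
      exact (proj2 (proj2 (proj2 (proj2 (HC j Cj)))) A B (Hij A MiA) MjB).
    + exists i. split; [exact Ci|].
      exact (proj2 (proj2 (proj2 (proj2 (HC i Ci)))) A B MiA (Hji B MjB)).
Qed.

Lemma mfilter_multrafilter (F : (X -> Prop) -> Prop) :
  is_mfilter m F -> exists p, is_multrafilter m p /\ subset F p.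
Proof.
  intro HF.
  pose (T := {M : (X -> Prop) -> Prop | is_mfilter m M /\ subset F M}).
  pose (F' := exist _ F (conj HF (fun A FA => FA)) : T).
  destruct (zorn_preorder F' (fun M M' : T => subset (proj1_sig M) (proj1_sig M')))
    as [[p [Hp Fp]] Hmax].
  - intros M A MA. exact MA.
  - intros M1 M2 M3 H12 H23 A M1A. exact (H23 A (H12 A M1A)).
  - intros C Hchain. destruct (classic (exists M, C M)) as [[M0 CM0] | Hempty].
    + pose proof (mfilter_chain_union C (@proj1_sig _ _) (ex_intro _ M0 CM0) Hchain
                    (fun M _ => proj1 (proj2_sig M))) as HU.
      exists (exist _ _ (conj HU (fun A FA => ex_intro _ M0 (conj CM0 (proj2 (proj2_sig M0) A FA))))).
      intros M CM A MA. exists M. auto.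
    + exists F'. intros M CM. exfalso. apply Hempty. exists M. exact CM.
  - exists p. split; [|exact Fp]. split; [exact Hp|].
    intros q Hq pq.
    exact (Hmax (exist _ q (conj Hq (fun A FA => pq A (Fp A FA)))) pq).
Qed.

Lemma infinite_meets_Xstar (B : X -> Prop) : m B -> infinite_set B -> meets_Xstar B.
Proof.
  intros HB HBinf.
  pose (F := fun C => m C /\ almost_subset B C).
  assert (HF : is_mfilter m F).
  { split; [|split; [|split; [|split]]].
    - intros C [HC _]. exact HC.
    - intros C [_ [l Hl]]. destruct (HBinf l) as [x [Bx Hx]]. exists x. auto.
    - split; [apply Hsig|]. exists nil. auto.
    - intros C C' [_ [l Hl]] HC' CC'. split; [exact HC'|]. exists l. auto.
    - intros C C' [HC [l Hl]] [HC' [l' Hl']].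
      split; [apply measurable_setI; assumption|]. exists (l ++ l').
      intros x Bx Hx. split; [apply Hl | apply Hl']; auto;
        intro H; apply Hx, in_or_app; auto. }
  destruct (mfilter_multrafilter F HF) as [q [Hq Fq]].
  exists (exist _ q Hq). split.
  - apply Fq. split; [exact HB|]. exists nil. auto.
  - intros [x Hx].
    assert (Hnx : q (fun y => ~ In y (x :: nil))).
    { apply Fq. split; [apply measurable_cofinite|]. exists (x :: nil). auto. }
    apply (proj2 (proj1 (Hx _) Hnx)). left. reflexivity.
Qed.

Lemma nowhere_dense_avoid (N : mbeta m -> Prop) (A : X -> Prop) :
  Xstar_nowhere_dense N -> m A -> meets_Xstar A ->
  exists A', m A' /\ subset A' A /\ meets_Xstar A' /\
    forall q, hat A' q -> Xstar q -> ~ N q.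
Proof.
  intros [_ HN] HA [p [HAp Hp]].
  assert (Hp' : exists p', (hat A p' /\ Xstar p') /\ ~ Xstar_closure N p').
  { apply NNPP. intro H. apply (HN _ (hat_Xstar_open A)) with p; [|auto].
    intros p' Hp'. apply NNPP. intro Hc. apply H. eauto. }
  destruct Hp' as [p' [[HAp' Hxp'] Hc]].
  assert (HW : exists W, Xstar_open W /\ W p' /\ forall q, W q -> ~ N q).
  { apply NNPP. intro H. apply Hc. split; [exact Hxp'|].
    intros W HW Wp'. apply NNPP. intro Hq. apply H. exists W.
    split; [exact HW|]. split; [exact Wp'|]. intros q Wq Nq. apply Hq. eauto. }
  destruct HW as [W [[V [HV HWV]] [Wp' HWN]]].
  destruct (HV p' (proj1 (proj1 (HWV p') Wp'))) as [C [HC [HCp' HCV]]].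
  destruct (mbeta_mfilter p') as [_ [_ [_ [_ Hint]]]].
  exists (fun x => A x /\ C x). split; [apply measurable_setI; assumption|].
  split; [intros x [Ax _]; exact Ax|]. split; [exists p'; split; [apply Hint|]; assumption|].
  intros q HACq Hq. apply HWN, HWV. split; [|exact Hq]. apply HCV.
  destruct (mbeta_mfilter q) as [_ [_ [_ [Hup _]]]].
  apply (Hup _ C HACq HC). intros x [_ Cx]. exact Cx.
Qed.

Lemma nowhere_dense_chain (N : nat -> mbeta m -> Prop) (A0 : X -> Prop) :
  (forall n, Xstar_nowhere_dense (N n)) -> m A0 -> meets_Xstar A0 ->
  exists As : nat -> X -> Prop, As 0 = A0 /\ (forall n, m (As n)) /\
    (forall n, meets_Xstar (As n)) /\ (forall n, subset (As (S n)) (As n)) /\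
    (forall n q, hat (As (S n)) q -> Xstar q -> ~ N n q).
Proof.
  intros HN HA0 HA0x.
  destruct (dependent_choice (fun A => m A /\ meets_Xstar A)
              (fun n A A' => subset A' A /\ forall q, hat A' q -> Xstar q -> ~ N n q)
              A0 (conj HA0 HA0x)) as [As [As0 HAs]].
  - intros n A [HA HAx].
    destruct (nowhere_dense_avoid (N n) A (HN n) HA HAx) as [A' [HA' [A'A [HA'x HA'N]]]].
    exists A'. auto.
  - exists As. split; [exact As0|].
    split; [|split; [|split]]; intro n; apply HAs.
Qed.

Lemma pseudo_intersection (As : nat -> X -> Prop) :
  (forall n, subset (As (S n)) (As n)) -> (forall n, infinite_set (As n)) ->
  exists B, m B /\ infinite_set B /\ forall n, almost_subset B (As n).
Proof.
  intros Hdec Hinf.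
  destruct (dependent_choice (fun _ => True)
              (fun n l l' => exists x, As n x /\ ~ In x l /\ l' = x :: l) nil I)
    as [L [L0 HL]].
  { intros n l _. destruct (Hinf n l) as [x [Ax Hx]]. exists (x :: l). eauto. }
  assert (HLstep : forall n, exists x, As n x /\ ~ In x (L n) /\ L (S n) = x :: L n).
  { intro n. apply HL. }
  assert (HLnodup : forall n, NoDup (L n) /\ length (L n) = n).
  { induction n as [|n [IHnd IHlen]]; [rewrite L0; split; [constructor | reflexivity]|].
    destruct (HLstep n) as [x [_ [Hx ->]]]. split; [constructor|simpl]; auto. }
  assert (HLmono : forall k n y, In y (L n) -> In y (L (k + n))).
  { induction k as [|k IH]; intros n y Hy; [exact Hy|].
    destruct (HLstep (k + n)) as [x [_ [_ E]]]. simpl. rewrite E. right. auto. }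
  assert (HAsmono : forall n k, subset (As (n + k)) (As k)).
  { induction n as [|n IH]; intros k x Hx; [exact Hx|]. apply IH, Hdec, Hx. }
  assert (HLnew : forall k n y, In y (L (n + k)) -> In y (L k) \/ As k y).
  { intros k. induction n as [|n IH]; intros y Hy; [left; exact Hy|].
    destruct (HLstep (n + k)) as [x [Ax [_ E]]]. simpl in Hy. rewrite E in Hy.
    destruct Hy as [<- | Hy]; [right; exact (HAsmono n k x Ax) | auto]. }
  exists (fun y => exists n, In y (L n)). split; [|split].
  - apply (proj2 (proj2 Hsig) (fun n y => In y (L n))). intro n. apply Hfin.
  - intro l. apply NNPP. intro Hl.
    destruct (HLnodup (S (length l))) as [Hnd Hlen].
    assert (Hincl : incl (L (S (length l))) l).
    { intros y Hy. apply NNPP. intro Hyl. apply Hl. exists y. split; eauto. }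
    pose proof (NoDup_incl_length Hnd Hincl). lia.
  - intro k. exists (L k). intros y [n Hy] Hyk.
    destruct (HLnew k n y) as [Hy' | Ay]; [| contradiction | exact Ay].
    rewrite PeanoNat.Nat.add_comm. apply HLmono, Hy.
Qed.

End Remainder.

Theorem theorem3p3 (X : Type) (m : (X -> Prop) -> Prop)
  (Hsig : is_sigma_algebra m)
  (Hinf : family_infinite m)
  (Hfin : contains_finite_sets m)
  (N : nat -> mbeta m -> Prop)
  (HN : forall n, Xstar_nowhere_dense (N n)) :
  Xstar_nowhere_dense (fun p => exists n, N n p).
Proof.
  split; [intros p [n Hp]; exact (proj1 (HN n) p Hp)|].
  intros U [V [HV HUV]] Hcl p Hp.
  destruct (proj1 (HUV p) Hp) as [HVp Hxp].
  destruct (HV p HVp) as [A [HA [HAp HAV]]].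
  destruct (nowhere_dense_chain X m Hsig N A HN HA (ex_intro _ p (conj HAp Hxp)))
    as [As [As0 [HAs [HAsx [Hdec HAsN]]]]].
  destruct (pseudo_intersection X m Hsig Hfin As Hdec
              (fun n => meets_Xstar_infinite X m Hsig Hfin (As n) (HAsx n)))
    as [B [HB [HBinf HBAs]]].
  destruct (infinite_meets_Xstar X m Hsig Hfin B HB HBinf) as [q [HBq Hxq]].
  assert (HUq : U q).
  { apply HUV. split; [apply HAV|exact Hxq]. rewrite <- As0.
    exact (Xstar_hat_almost_subset X m Hsig Hfin q _ B Hxq (HAs 0) HBq (HBAs 0)). }
  destruct (proj2 (Hcl q HUq) _ (hat_Xstar_open X m B) (conj HBq Hxq))
    as [r [[HBr Hxr] [n HNr]]].
  exact (HAsN n r (Xstar_hat_almost_subset X m Hsig Hfin r _ B Hxr (HAs (S n)) HBr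
                     (HBAs (S n))) Hxr HNr).
Qed.
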